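(* Let $\mathcal L_1$ and $\mathcal L_2$ be countable sets of finite linear orders. Then $\mathcal L_1=\mathcal L_2$ (as sets of isomorphism types) if and only if $\mathrm{Shuf}(\mathcal L_1)\cong\mathrm{Shuf}(\mathcal L_2)$. Moreover, no interval of $\mathrm{Shuf}(\mathcal L_1)$ is isomorphic to $\omega$.
   Context: For a countable set $I$, a dense $I$-coloring of $\mathbb Q$ is a map $c:\mathbb Q\to I$ such that for all $x<y$ in $\mathbb Q$ and all $i\in I$ there is $z$ with $x<z<y$ and $c(z)=i$. For a set of linear orders $\mathcal L=\{L_i\mid i\in I\}$ with $I$ countable, $\mathrm{Shuf}(\mathcal L)=\sum_{x\in\mathbb Q}L_{c(x)}$ for a dense $I$-coloring $c$ (this is independent of $c$ up to isomorphism), where $\sum_{x\in\mathbb Q}$ is the ordered sum (lexicographic on pairs: first by $x$, then within $L_{c(x)}$). ''$\mathcal L_1=\mathcal L_2$'' means every member of each is isomorphic to some member of the other. An interval of a linear order is a subset $I$ with $x,y\in I$, $x<z<y$ implying $z\in I$; $\omega$ is the order type of $(\mathbb N;\le)$. *)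

(* Q is mathcomp's [rat], countable index sets are countTypes. *)
From mathcomp Require Import all_boot all_order all_algebra.
From Stdlib Require Lists.List.
Set Implicit Arguments. Unset Strict Implicit. Unset Printing Implicit Defensive.
Import Order.TTheory GRing.Theory Num.Theory.

Record LinOrder := {
  lcar :> Type;
  lo : lcar -> lcar -> Prop;
  lo_refl : forall x, lo x x;
  lo_antisym : forall x y, lo x y -> lo y x -> x = y;
  lo_trans : forall x y z, lo x y -> lo y z -> lo x z;
  lo_total : forall x y, lo x y \/ lo y x }.

Definition finite_type (A : Type) : Prop := exists s : list A, forall x, Stdlib.Lists.List.In x s.
Definition finite_LO (L : LinOrder) : Prop := finite_type L /\ inhabited (lcar L).

Definition iso_rel (A B : Type) (RA : A -> A -> Prop) (RB : B -> B -> Prop) : Prop :=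
  exists (f : A -> B) (g : B -> A),
    cancel f g /\ cancel g f /\ forall x y, RA x y <-> RB (f x) (f y).

Definition iso_LO (L M : LinOrder) : Prop := iso_rel (@lo L) (@lo M).

Definition same_types (I J : Type) (L1 : I -> LinOrder) (L2 : J -> LinOrder) : Prop :=
  (forall i, exists j, iso_LO (L1 i) (L2 j)) /\
  (forall j, exists i, iso_LO (L1 i) (L2 j)).

Definition dense_coloring (I : Type) (c : rat -> I) : Prop :=
  forall (x y : rat) (i : I), (x < y)%R -> exists z : rat, (x < z)%R /\ (z < y)%R /\ c z = i.

(* The ordered sum  sum_{x in Q} L_{c(x)}  (lexicographic). *)
Definition qsum_car (I : Type) (L : I -> LinOrder) (c : rat -> I) : Type :=
  {x : rat & lcar (L (c x))}.

Definition qsum_le (I : Type) (L : I -> LinOrder) (c : rat -> I)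
  (p q : qsum_car L c) : Prop :=
  (projT1 p < projT1 q)%R \/
  exists e : projT1 p = projT1 q,
    lo (eq_rect (projT1 p) (fun x => lcar (L (c x))) (projT2 p) (projT1 q) e) (projT2 q).

Definition is_interval (A : Type) (R : A -> A -> Prop) (P : A -> Prop) : Prop :=
  forall x y z, P x -> P y -> R x z -> R z y -> P z.

Definition restr (A : Type) (R : A -> A -> Prop) (P : A -> Prop) :
  {a : A | P a} -> {a : A | P a} -> Prop := fun u v => R (proj1_sig u) (proj1_sig v).

Definition omega_le : nat -> nat -> Prop := fun m n => (m <= n)%N.

From mathcomp Require Import all_boot all_order all_algebra.
From mathcomp Require Import zify lra.
From Stdlib Require Import ClassicalEpsilon Classical Eqdep_dec.
Import Order.TTheory GRing.Theory Num.Theory.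
Set Implicit Arguments. Unset Strict Implicit.

(* In [Shuf(L)] the blocks [L_(c x)] can be read off the order alone: two points
   lie in the same block iff only finitely many points lie between them (in
   either direction), because blocks are finite while between two distinct
   rationals there are infinitely many rationals, each carrying a nonempty
   block.  Hence an isomorphism of shuffles maps blocks onto blocks, which
   gives [L1 = L2].  Conversely, a back-and-forth construction yields an
   order automorphism [h] of [Q] such that the blocks over [x] and [h x] are
   isomorphic, and the blockwise isomorphisms assemble.  Finally, in [omega]
   only finitely many points lie between any two, so an interval isomorphic
   to [omega] would sit inside one finite block. *)

Lemma no_injection_nat_in_list (A : Type) (l : list A) (h : nat -> A) :
  injective h -> (forall n, List.In (h n) l) -> False.
Proof.
elim: l h => [|a l IH] h hi hin; first by case: (hin 0).
case: (classic (exists n0, h n0 = a)) => [[n0 hn0]|nh].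
- pose h' n := h (if n < n0 then n else n.+1).
  apply: (IH h').
  + move=> m n /hi; case: (ltnP m n0); case: (ltnP n n0) => ? ? ?; lia.
  + move=> n; case: (hin (if n < n0 then n else n.+1)) => //= e.
    have := hi _ _ (etrans hn0 e); case: ltnP => ? ?; lia.
- apply: (IH h hi) => n; case: (hin n) => //= e; case: nh; by exists n.
Qed.

Definition finitely_between (A : Type) (R : A -> A -> Prop) (x y : A) : Prop :=
  ~ exists s : nat -> A, injective s /\ forall n, R x (s n) /\ R (s n) y.

Lemma finitely_between_pullback (A B : Type) (RA : A -> A -> Prop) (RB : B -> B -> Prop)
    (f : A -> B) x y :
  injective f -> (forall a b, RA a b -> RB (f a) (f b)) ->
  finitely_between RB (f x) (f y) -> finitely_between RA x y.
Proof.
move=> fi fm nb [s [si hs]]; apply: nb; exists (f \o s); split; first exact: inj_comp.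
by move=> n; case: (hs n) => h1 h2; split; apply: fm.
Qed.

Lemma finitely_between_interval (A : Type) (R : A -> A -> Prop) (P : A -> Prop)
    (u v : {a | P a}) :
  is_interval R P -> finitely_between (@restr _ R P) u v ->
  finitely_between R (proj1_sig u) (proj1_sig v).
Proof.
move=> HP nb [s [si hs]].
have Ps n : P (s n).
  by case: (hs n); apply: HP; [exact: proj2_sig | exact: proj2_sig].
apply: nb; exists (fun n => exist P (s n) (Ps n)); split; last exact: hs.
by move=> m n /(f_equal (@proj1_sig _ _)) /si.
Qed.

Lemma finitely_between_omega m n : finitely_between omega_le m n.
Proof.
move=> [s [si hs]]; apply: (no_injection_nat_in_list (l := List.seq 0 n.+1) si) => k.
by apply/List.in_seq; case: (hs k); rewrite /omega_le; lia.
Qed.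

Lemma infinitely_many_rat_between (x y : rat) : (x < y)%R ->
  exists z : nat -> rat, injective z /\ forall k, (x < z k)%R /\ (z k < y)%R.
Proof.
move=> xy; have d0 : (0 < y - x)%R by rewrite subr_gt0.
exists (fun k => x + (y - x) / (k.+2)%:R)%R; split.
- move=> m n /addrI /(mulfI (lt0r_neq0 d0)) /invr_inj /eqP.
  by rewrite eqr_nat => /eqP [].
- move=> k; have k0 : (0 < (k.+2)%:R :> rat)%R by rewrite ltr0n.
  split; first by rewrite ltrDl divr_gt0.
  by rewrite -ltrBrDl ltr_pdivrMr // ltr_pMr // ltr1n.
Qed.

Notation mk L c x a := (existT (fun z : rat => lcar (L (c z))) x a).

Section QSum.
Variables (I : Type) (L : I -> LinOrder) (c : rat -> I).
Notation car := (qsum_car L c).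
Notation le := (@qsum_le I L c).

Lemma qsum_le_fst (p q : car) : le p q -> (projT1 p <= projT1 q)%R.
Proof. by case=> [/ltW //| [e _]]; rewrite e. Qed.

Lemma qsum_le_refl (p : car) : le p p.
Proof. right; exists erefl; exact: lo_refl. Qed.

Lemma qsum_le_block x (a b : L (c x)) : le (mk L c x a) (mk L c x b) <-> lo a b.
Proof.
split => [|H]; last by right; exists erefl.
case=> /=; first by rewrite ltxx.
by case=> e; rewrite (eq_irrelevance e erefl).
Qed.

Lemma qsum_le_diff_block x y (a : L (c x)) (b : L (c y)) :
  x <> y -> le (mk L c x a) (mk L c y b) <-> (x < y)%R.
Proof. by move=> ne; split => [[//|[e _]]|]; [|left]. Qed.

Definition block_cast (q : car) y (e : projT1 q = y) : L (c y) :=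
  eq_rect (projT1 q) (fun x => lcar (L (c x))) (projT2 q) y e.

Lemma block_castK q y e : mk L c y (@block_cast q y e) = q.
Proof. by case: q e => x a /= e; subst. Qed.

Lemma block_cast_mk q y (e : projT1 q = y) a : q = mk L c y a -> block_cast e = a.
Proof. by move=> E; subst q; rewrite /block_cast /= (eq_irrelevance e erefl). Qed.

Hypothesis fin : forall i, finite_LO (L i).

Lemma no_injection_nat_in_block x (s : nat -> car) :
  injective s -> (forall n, projT1 (s n) = x) -> False.
Proof.
move=> si hs; case: (fin (c x)) => [[l Hl] _].
apply: (no_injection_nat_in_list (l := List.map (fun a => mk L c x a) l) si) => n.
by move: (hs n); case: (s n) => y b /= e; subst y; apply: List.in_map.
Qed.

Lemma finitely_between_same_block p q : projT1 p = projT1 q -> finitely_between le p q.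
Proof.
move=> e [s [si H]]; apply: (no_injection_nat_in_block (x := projT1 p) si) => n.
case: (H n) => /qsum_le_fst h1 /qsum_le_fst h2.
by apply: le_anti; rewrite -e in h2; rewrite h1 h2.
Qed.

Lemma not_finitely_between_lt p q : (projT1 p < projT1 q)%R -> ~ finitely_between le p q.
Proof.
move=> lt; apply; have [z [zi zb]] := infinitely_many_rat_between lt.
pose pt x := epsilon (proj2 (fin (c x))) xpredT.
exists (fun k => mk L c (z k) (pt (z k))); split.
- by move=> m n /(f_equal (@projT1 _ _)) /zi.
- by move=> n; case: (zb n) => h1 h2; split; left.
Qed.

Lemma same_block_of_finitely_between p q :
  finitely_between le p q -> finitely_between le q p -> projT1 p = projT1 q.
Proof.
move=> npq nqp.
by case: (ltgtP (projT1 p) (projT1 q)) => // /not_finitely_between_lt.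
Qed.

Lemma qsum_interval_not_omega (P : car -> Prop) :
  is_interval le P -> ~ iso_rel (@restr _ le P) omega_le.
Proof.
move=> HP [f [g [fK [gK Hf]]]].
have between (u v : {a | P a}) : finitely_between (@restr _ le P) u v.
  apply: (finitely_between_pullback (RB := omega_le) (can_inj fK)).
    by move=> a b /Hf.
  exact: finitely_between_omega.
have blocks (u v : {a | P a}) : projT1 (proj1_sig u) = projT1 (proj1_sig v).
  by apply: same_block_of_finitely_between; apply: finitely_between_interval.
apply: (no_injection_nat_in_block (x := projT1 (proj1_sig (g 0)))
  (s := fun n => proj1_sig (g n))).
- have g_mono m n : proj1_sig (g m) = proj1_sig (g n) -> (m <= n)%N.
    move=> e; have := (Hf (g m) (g n)).1; rewrite /omega_le !gK /restr e.
    by apply; exact: qsum_le_refl.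
  by move=> m n e; apply/eqP; rewrite eqn_leq !g_mono.
- by move=> n; apply: blocks.
Qed.

End QSum.

Section QSumIso.
Variables (I1 I2 : Type) (L1 : I1 -> LinOrder) (L2 : I2 -> LinOrder).
Variables (c1 : rat -> I1) (c2 : rat -> I2).
Hypotheses (fin1 : forall i, finite_LO (L1 i)) (fin2 : forall j, finite_LO (L2 j)).
Variables (F : qsum_car L1 c1 -> qsum_car L2 c2) (G : qsum_car L2 c2 -> qsum_car L1 c1).
Hypotheses (FK : cancel F G) (GK : cancel G F).
Hypothesis HF : forall p q, qsum_le p q <-> qsum_le (F p) (F q).

Lemma qsum_iso_same_block p q : projT1 p = projT1 q -> projT1 (F p) = projT1 (F q).
Proof.
have G_mono a b : qsum_le a b -> qsum_le (G a) (G b) by rewrite HF !GK.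
move=> e; apply: (same_block_of_finitely_between fin2);
  apply: (finitely_between_pullback (can_inj GK) G_mono); rewrite !FK;
  exact: finitely_between_same_block.
Qed.

End QSumIso.

Lemma qsum_iso_block_iso (I1 I2 : Type) (L1 : I1 -> LinOrder) (L2 : I2 -> LinOrder)
    (c1 : rat -> I1) (c2 : rat -> I2)
    (fin1 : forall i, finite_LO (L1 i)) (fin2 : forall j, finite_LO (L2 j)) :
  iso_rel (@qsum_le _ L1 c1) (@qsum_le _ L2 c2) ->
  forall x, exists y, iso_LO (L1 (c1 x)) (L2 (c2 y)).
Proof.
move=> [F [G [FK [GK HF]]]] x.
have HG p q : qsum_le p q <-> qsum_le (G p) (G q) by rewrite HF !GK.
case: (fin1 (c1 x)) => [_ [a0]].
set y := projT1 (F (mk L1 c1 x a0)).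
have ey a : projT1 (F (mk L1 c1 x a)) = y by apply: (qsum_iso_same_block fin1 fin2 FK GK HF).
have ex b : projT1 (G (mk L2 c2 y b)) = x.
  transitivity (projT1 (G (F (mk L1 c1 x a0)))); last by rewrite FK.
  exact: (qsum_iso_same_block fin2 fin1 GK FK HG).
exists y, (fun a => block_cast (ey a)), (fun b => block_cast (ex b)); split; [|split].
- by move=> a; apply: block_cast_mk; rewrite block_castK FK.
- by move=> b; apply: block_cast_mk; rewrite block_castK GK.
- move=> a b; rewrite -(qsum_le_block (c := c1)) -(qsum_le_block (c := c2)) !block_castK.
  exact: HF.
Qed.

Lemma qsum_iso_same_types (I1 I2 : Type) (L1 : I1 -> LinOrder) (L2 : I2 -> LinOrder)
    (c1 : rat -> I1) (c2 : rat -> I2)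
    (fin1 : forall i, finite_LO (L1 i)) (fin2 : forall j, finite_LO (L2 j)) :
  dense_coloring c1 -> iso_rel (@qsum_le _ L1 c1) (@qsum_le _ L2 c2) ->
  forall i, exists j, iso_LO (L1 i) (L2 j).
Proof.
move=> dc1 iso i; have [x [_ [_ <-]]] := dc1 0%R 1%R i ltr01.
by have [y hy] := qsum_iso_block_iso fin1 fin2 iso x; exists (c2 y).
Qed.

Open Scope ring_scope.

Lemma exists_max_mem (d : rat) (s : seq rat) :
  exists2 b, b \in d :: s & forall r, r \in d :: s -> r <= b.
Proof.
elim: s => [|r s [b bin bmax]]; first by exists d => [|r]; rewrite ?inE // => /eqP ->.
have mem_cons3 x : x \in [:: d, r & s] = (x == r) || (x \in d :: s).
  by rewrite !inE orbCA.
case: (lerP b r) => br.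
- exists r => [|x]; rewrite mem_cons3 ?eqxx //.
  by case/orP => [/eqP -> // | /bmax /le_trans]; apply.
- exists b => [|x]; rewrite mem_cons3 ?bin ?orbT //.
  by case/orP => [/eqP -> | /bmax //]; apply: ltW.
Qed.

Lemma exists_min_mem (d : rat) (s : seq rat) :
  exists2 b, b \in d :: s & forall r, r \in d :: s -> b <= r.
Proof.
have [b bin bmax] := exists_max_mem (- d) (map -%R s).
have memN x : (- x \in - d :: map -%R s) = (x \in d :: s).
  by rewrite -(map_cons -%R) mem_map //; exact: oppr_inj.
exists (- b) => [|r]; first by rewrite -memN opprK.
by rewrite -memN => /bmax; rewrite lerNl.
Qed.

Lemma rat_separate (Ls Rs : seq rat) : (forall l r, l \in Ls -> r \in Rs -> l < r) ->
  exists a b, a < b /\ (forall l, l \in Ls -> l <= a) /\ (forall r, r \in Rs -> b <= r).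
Proof.
move=> LR.
have [b0 _ b0min] := exists_min_mem 0 Rs.
have [a aIn amax] := exists_max_mem (b0 - 1) Ls.
have [b bIn bmin] := exists_min_mem (a + 1) Rs.
exists a, b; split; last by split=> x xin; [apply: amax | apply: bmin]; rewrite inE xin orbT.
move: bIn aIn; rewrite !inE => /orP [/eqP -> | bRs]; first lra.
case/orP => [/eqP -> | /LR/(_ bRs) //].
by have := b0min b; rewrite inE bRs orbT => /(_ isT); lra.
Qed.

Section BackAndForth.

Definition partial_iso (E : rat -> rat -> Prop) (p : seq (rat * rat)) :=
  (forall u v u' v', (u, v) \in p -> (u', v') \in p -> (u < u') <-> (v < v')) /\
  (forall u v, (u, v) \in p -> E u v).

Section Forth.
Variable E : rat -> rat -> Prop.
Hypothesis forth : forall x a b, a < b -> exists y, a < y /\ y < b /\ E x y.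

Lemma partial_iso_extend p x :
  partial_iso E p -> x \notin map fst p -> exists y, partial_iso E ((x, y) :: p).
Proof.
move=> [Vo VE] nx.
pose Ls := map snd (filter (fun uv => uv.1 < x) p).
pose Rs := map snd (filter (fun uv => x < uv.1) p).
have LR l r : l \in Ls -> r \in Rs -> l < r.
  move=> /mapP [[u v] + ->] /mapP [[u' v'] + ->]; rewrite !mem_filter /=.
  by move=> /andP [ux uvp] /andP [xu uvp']; apply/(Vo _ _ _ _ uvp uvp'); apply: lt_trans xu.
have [a [b [ab [Ha Hb]]]] := rat_separate LR.
have [y [ay [yb Exy]]] := forth x ab.
have side u v : (u, v) \in p -> ((x < u) <-> (y < v)) /\ ((u < x) <-> (v < y)).
  move=> uvp; have ux : u != x by apply: contraNneq nx => <-; apply/mapP; exists (u, v).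
  have vL : u < x -> v <= a.
    by move=> h; apply: Ha; apply/mapP; exists (u, v); rewrite ?mem_filter /= ?h.
  have vR : x < u -> b <= v.
    by move=> h; apply: Hb; apply/mapP; exists (u, v); rewrite ?mem_filter /= ?h.
  by case: (ltgtP x u) ux => // hxu _; [have := vR hxu | have := vL hxu];
    split; split => // h; lra.
exists y; split.
- move=> u v u' v'; rewrite !inE => /orP [/eqP [-> ->] | h1] /orP [/eqP [-> ->] | h2].
  + by rewrite !ltxx.
  + exact: (side _ _ h2).1.
  + exact: (side _ _ h1).2.
  + exact: Vo.
- by move=> u v; rewrite inE => /orP [/eqP [-> ->] // | /VE].
Qed.

Definition extend_dom p x :=
  if x \in map fst p then p
  else (x, epsilon (inhabits 0) (fun y => partial_iso E ((x, y) :: p))) :: p.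

Lemma extend_dom_partial_iso p x : partial_iso E p -> partial_iso E (extend_dom p x).
Proof.
rewrite /extend_dom; case: ifPn => // nx V.
apply: (epsilon_spec (inhabits 0) (fun y => partial_iso E ((x, y) :: p))).
exact: partial_iso_extend.
Qed.

Lemma extend_dom_subset p x : {subset p <= extend_dom p x}.
Proof. by rewrite /extend_dom; case: ifP => _ z // h; rewrite inE h orbT. Qed.

Lemma mem_extend_dom p x : x \in map fst (extend_dom p x).
Proof. by rewrite /extend_dom; case: ifP => //; rewrite inE eqxx. Qed.

End Forth.

Definition swap_pair (uv : rat * rat) := (uv.2, uv.1).

Lemma swap_pairK : involutive swap_pair. Proof. by case. Qed.

Lemma mem_swap_pair u v p : ((u, v) \in map swap_pair p) = ((v, u) \in p).
Proof. by rewrite -[(u, v)]/(swap_pair (v, u)) mem_map //; exact: inv_inj swap_pairK. Qed.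

Lemma partial_iso_swap (E : rat -> rat -> Prop) p :
  partial_iso E p -> partial_iso (fun a b => E b a) (map swap_pair p).
Proof.
move=> [Vo VE]; split => [u v u' v'|u v]; rewrite !mem_swap_pair; last exact: VE.
by move=> h1 h2; symmetry; exact: Vo h1 h2.
Qed.

Variable E : rat -> rat -> Prop.
Hypothesis forth : forall x a b, a < b -> exists y, a < y /\ y < b /\ E x y.
Hypothesis back : forall y a b, a < b -> exists x, a < x /\ x < b /\ E x y.

(* The backward step is the forward step for the converse relation. *)
Definition extend_cod p y := map swap_pair (extend_dom (fun a b => E b a) (map swap_pair p) y).

Lemma extend_cod_partial_iso p y : partial_iso E p -> partial_iso E (extend_cod p y).
Proof.
move=> V; apply: (partial_iso_swap (E := fun a b => E b a)).
by apply: extend_dom_partial_iso; [exact: back | exact: partial_iso_swap].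
Qed.

Lemma extend_cod_subset p y : {subset p <= extend_cod p y}.
Proof.
by move=> [u v] h; rewrite mem_swap_pair; apply: extend_dom_subset; rewrite mem_swap_pair.
Qed.

Lemma mem_extend_cod p y : y \in map snd (extend_cod p y).
Proof. by rewrite -map_comp (@eq_map _ _ _ fst) ?mem_extend_dom //; case. Qed.

Definition rat_of_nat n : rat := odflt 0 (unpickle n).

Lemma pickle_ratK : cancel pickle rat_of_nat.
Proof. by move=> x; rewrite /rat_of_nat pickleK. Qed.

Fixpoint bf_chain n :=
  if n is m.+1 then
    extend_cod (extend_dom E (bf_chain m) (rat_of_nat m)) (rat_of_nat m)
  else [::].

Lemma bf_chain_partial_iso n : partial_iso E (bf_chain n).
Proof.
elim: n => [|n IH] /=; first by split.
by apply/extend_cod_partial_iso/extend_dom_partial_iso.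
Qed.

Lemma bf_chain_subset m n : (m <= n)%N -> {subset bf_chain m <= bf_chain n}.
Proof.
elim: n => [|n IH]; first by rewrite leqn0 => /eqP ->.
rewrite leq_eqVlt => /orP [/eqP -> // | ltmn] z hz /=.
by apply/extend_cod_subset/extend_dom_subset; exact: IH.
Qed.

Definition in_bf_chain uv := exists n, uv \in bf_chain n.

Lemma in_bf_chain_rel u v u' v' : in_bf_chain (u, v) -> in_bf_chain (u', v') ->
  ((u < u') <-> (v < v')) /\ E u v.
Proof.
move=> [m hm] [n hn]; have [Vo VE] := bf_chain_partial_iso (maxn m n).
have h1 := bf_chain_subset (leq_maxl m n) hm.
have h2 := bf_chain_subset (leq_maxr m n) hn.
by split; [exact: Vo | exact: VE].
Qed.

Lemma in_bf_chain_fun u v v' : in_bf_chain (u, v) -> in_bf_chain (u, v') -> v = v'.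
Proof.
move=> h1 h2; have [[_ a] _] := in_bf_chain_rel h1 h2; have [[_ b] _] := in_bf_chain_rel h2 h1.
by case: (ltgtP v v') => // [/a|/b]; rewrite ltxx.
Qed.

Lemma in_bf_chain_inj u u' v : in_bf_chain (u, v) -> in_bf_chain (u', v) -> u = u'.
Proof.
move=> h1 h2; have [[a _] _] := in_bf_chain_rel h1 h2; have [[b _] _] := in_bf_chain_rel h2 h1.
by case: (ltgtP u u') => // [/a|/b]; rewrite ltxx.
Qed.

Lemma in_bf_chain_dom x : exists v, in_bf_chain (x, v).
Proof.
have /mapP [[u v] uv /= ->] := mem_extend_dom E (bf_chain (pickle x)) x.
by exists v, (pickle x).+1; rewrite /= pickle_ratK; exact: extend_cod_subset.
Qed.

Lemma in_bf_chain_cod y : exists u, in_bf_chain (u, y).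
Proof.
have /mapP [[u v] uv /= ->] := mem_extend_cod (extend_dom E (bf_chain (pickle y)) y) y.
by exists u, (pickle y).+1; rewrite /= pickle_ratK.
Qed.

Lemma back_and_forth : exists h hinv : rat -> rat, cancel h hinv /\ cancel hinv h /\
  (forall x y, x < y <-> h x < h y) /\ forall x, E x (h x).
Proof.
pose h x := epsilon (inhabits 0) (fun v => in_bf_chain (x, v)).
pose hinv y := epsilon (inhabits 0) (fun u => in_bf_chain (u, y)).
have hP x : in_bf_chain (x, h x).
  exact: (epsilon_spec (inhabits 0) (fun v => in_bf_chain (x, v))) (in_bf_chain_dom x).
have hinvP y : in_bf_chain (hinv y, y).
  exact: (epsilon_spec (inhabits 0) (fun u => in_bf_chain (u, y))) (in_bf_chain_cod y).
exists h, hinv; split; [|split; [|split]].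
- by move=> x; apply: in_bf_chain_inj (hinvP (h x)) (hP x).
- by move=> y; apply: in_bf_chain_fun (hP (hinv y)) (hinvP y).
- by move=> x y; exact: (in_bf_chain_rel (hP x) (hP y)).1.
- by move=> x; exact: (in_bf_chain_rel (hP x) (hP x)).2.
Qed.

End BackAndForth.

Close Scope ring_scope.

Lemma iso_rel_of_bij (A B : Type) (RA : A -> A -> Prop) (RB : B -> B -> Prop) (F : A -> B) :
  injective F -> (forall b, exists a, F a = b) ->
  (forall x y, RA x y <-> RB (F x) (F y)) -> iso_rel RA RB.
Proof.
move=> Fi Fs HF.
pose G b := proj1_sig (constructive_indefinite_description _ (Fs b)).
have GK : cancel G F by move=> b; exact: proj2_sig (constructive_indefinite_description _ (Fs b)).
by exists F, G; split; [move=> a; apply: Fi; rewrite GK | split].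
Qed.

Lemma iso_rel_sym (A B : Type) (RA : A -> A -> Prop) (RB : B -> B -> Prop) :
  iso_rel RA RB -> iso_rel RB RA.
Proof.
move=> [f [g [fK [gK H]]]]; exists g, f; split; [|split] => //.
by move=> x y; rewrite H !gK.
Qed.

Lemma qsum_iso_of_block_iso (I1 I2 : Type) (L1 : I1 -> LinOrder) (L2 : I2 -> LinOrder)
    (c1 : rat -> I1) (c2 : rat -> I2) (h hinv : rat -> rat) :
  cancel h hinv -> cancel hinv h -> (forall x y, (x < y)%R <-> (h x < h y)%R) ->
  (forall x, iso_LO (L1 (c1 x)) (L2 (c2 (h x)))) ->
  iso_rel (@qsum_le _ L1 c1) (@qsum_le _ L2 c2).
Proof.
move=> hK hinvK hmono hiso.
pose phi x := constructive_indefinite_description _ (hiso x).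
have phiP x : exists g, cancel (proj1_sig (phi x)) g /\ cancel g (proj1_sig (phi x)) /\
    forall a b, lo a b <-> lo (proj1_sig (phi x) a) (proj1_sig (phi x) b).
  exact: proj2_sig (phi x).
apply: (@iso_rel_of_bij _ _ _ _ (fun p => mk L2 c2 (h (projT1 p)) (proj1_sig (phi _) (projT2 p)))).
- case=> x a [y b] /= e.
  have /= /(can_inj hK) exy := f_equal (@projT1 _ _) e; subst y.
  have [g [gK _]] := phiP x.
  have := inj_pair2_eq_dec _ (fun u v : rat => decP (u =P v)) _ _ _ _ e.
  by move=> /(can_inj gK) ->.
- case=> y b; move: b; rewrite -(hinvK y) => b.
  have [g [_ [gK _]]] := phiP (hinv y).
  by exists (mk L1 c1 (hinv y) (g b)); rewrite /= gK.
- case=> x a [y b] /=; case: (x =P y) => [exy|ne]; first subst y.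
  + by rewrite !qsum_le_block; have [g [_ [_ H]]] := phiP x.
  + by rewrite !qsum_le_diff_block //; move/(can_inj hK).
Qed.

Lemma same_types_qsum_iso (I1 I2 : Type) (L1 : I1 -> LinOrder) (L2 : I2 -> LinOrder)
    (c1 : rat -> I1) (c2 : rat -> I2) :
  dense_coloring c1 -> dense_coloring c2 -> same_types L1 L2 ->
  iso_rel (@qsum_le _ L1 c1) (@qsum_le _ L2 c2).
Proof.
move=> dc1 dc2 [S1 S2].
have [||h [hinv [hK [hinvK [hmono hiso]]]]] :=
  @back_and_forth (fun x y => iso_LO (L1 (c1 x)) (L2 (c2 y))).
- move=> x a b ab; have [j hj] := S1 (c1 x).
  by have [y [ay [yb cy]]] := dc2 a b j ab; exists y; rewrite cy.
- move=> y a b ab; have [i hi] := S2 (c2 y).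
  by have [x [ax [xb cx]]] := dc1 a b i ab; exists x; rewrite cx.
exact: (qsum_iso_of_block_iso hK hinvK hmono hiso).
Qed.

Theorem lemma11 (I1 I2 : countType) (L1 : I1 -> LinOrder) (L2 : I2 -> LinOrder)
  (fin1 : forall i, finite_LO (L1 i)) (fin2 : forall j, finite_LO (L2 j))
  (c1 : rat -> I1) (c2 : rat -> I2)
  (dc1 : dense_coloring c1) (dc2 : dense_coloring c2) :
  (same_types L1 L2 <-> iso_rel (@qsum_le _ L1 c1) (@qsum_le _ L2 c2)) /\
  (forall P : qsum_car L1 c1 -> Prop,
     is_interval (@qsum_le _ L1 c1) P ->
     ~ iso_rel (@restr _ (@qsum_le _ L1 c1) P) omega_le).
Proof.
split; last by move=> P; exact: qsum_interval_not_omega fin1 P.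
split; first exact: same_types_qsum_iso.
move=> iso; split; first exact: qsum_iso_same_types fin1 fin2 dc1 iso.
move=> j; have [i hi] := qsum_iso_same_types fin2 fin1 dc2 (iso_rel_sym iso) j.
by exists i; apply: iso_rel_sym.
Qed.
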